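(* Let $q=12n+1$ be a prime power and let $C^6$ be the subgroup of index $6$ of the multiplicative group $\mathbb{F}_q^*$. Assume there is a $16$-tuple $(a_1,\dots,a_{16})$ of elements of $\mathbb{F}_q^*$ such that: (i) each of the four lists $\Delta_{0,0}=(a_1-a_2,\ a_5-a_6,\ a_{10}-a_{11},\ a_{10}-a_{12},\ a_{11}-a_{12},\ a_{15}-a_{16})$, $\Delta_{0,1}=(a_1-a_3,\ a_2-a_3,\ a_5-a_7,\ a_6-a_7,\ a_{14}-a_{15},\ a_{14}-a_{16})$, $\Delta_{1,0}=(a_1-a_4,\ a_2-a_4,\ a_5-a_8,\ a_6-a_8,\ a_{13}-a_{15},\ a_{13}-a_{16})$, $\Delta_{1,1}=(a_3-a_4,\ a_7-a_8,\ a_9-a_{10},\ a_9-a_{11},\ a_9-a_{12},\ a_{13}-a_{14})$ is a complete system of representatives for the cosets of $C^6$ in $\mathbb{F}_q^*$ (i.e. its six entries lie in six distinct cosets); and (ii) each of the four lists $U_{0,0}=(a_1,a_2,a_5,a_6,a_9)$, $U_{0,1}=(a_3,a_7,a_{13})$, $U_{1,0}=(a_4,a_8,a_{14})$, $U_{1,1}=(a_{10},a_{11},a_{12},a_{15},a_{16})$ is a partial system of representatives for the cosets of $C^6$ in $\mathbb{F}_q^*$ distinct from $C^6$ (i.e. its entries lie in pairwise distinct cosets, none of which is $C^6$). Then there exists a nested $(4q,4,1)$-BIBD.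
   Context: A $(v,k,\lambda)$-BIBD is a set $X$ of $v$ points with a multiset $\mathcal{A}$ of $k$-subsets such that every pair of distinct points lies in exactly $\lambda$ blocks (partial: at most $\lambda$). A $(v,4,1)$-BIBD is nested if there is a map $\phi:\mathcal{A}\to X$ such that $\{A\cup\{\phi(A)\}:A\in\mathcal{A}\}$ is the block multiset of a partial $(v,5,2)$-BIBD on $X$ (in particular $\phi(A)\notin A$). *)

From HB Require Import structures.
From mathcomp Require Import all_boot all_order all_algebra.
Set Implicit Arguments. Unset Strict Implicit. Unset Printing Implicit Defensive.
Import GRing.Theory.
Local Open Scope ring_scope.

(* The subgroup C^6 of index 6 of F^* : the nonzero sixth powers.
   (When 6 divides |F^*|, this is the unique subgroup of index 6 of the cyclic group F^*.) *)
Definition C6 (F : finFieldType) : {set F} :=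
  [set y : F | [exists x : F, (x != 0) && (y == x ^+ 6)]].

Definition same_coset6 (F : finFieldType) (x y : F) : bool := x / y \in C6 F.

Definition distinct_cosets6 (F : finFieldType) (s : seq F) : bool :=
  all (fun x => x != 0) s && pairwise (fun x y => ~~ same_coset6 x y) s.

Definition complete_rep6 (F : finFieldType) (s : seq F) : bool :=
  (size s == 6%N) && distinct_cosets6 s.

Definition partial_rep6 (F : finFieldType) (s : seq F) : bool :=
  distinct_cosets6 s && all (fun x => x \notin C6 F) s.

(* Designs on the point set 'I_v; blocks form a multiset, given as a seq. *)
Definition BIBD (v k lam : nat) (B : seq {set 'I_v}) : Prop :=
  all (fun A : {set 'I_v} => #|A| == k) B /\
  forall x y : 'I_v, x != y ->
    count (fun A : {set 'I_v} => (x \in A) && (y \in A)) B = lam.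

Definition partial_BIBD (v k lam : nat) (B : seq {set 'I_v}) : Prop :=
  all (fun A : {set 'I_v} => #|A| == k) B /\
  forall x y : 'I_v, x != y ->
    (count (fun A : {set 'I_v} => (x \in A) && (y \in A)) B <= lam)%N.

(* Nested (v,4,1)-BIBD: phi assigns to each block (occurrence) a point phi(A),
   listed in parallel with B. *)
Definition nested_BIBD (v : nat) (B : seq {set 'I_v}) : Prop :=
  BIBD 4 1 B /\
  exists phi : seq 'I_v,
    size phi = size B /\
    all (fun p : {set 'I_v} * 'I_v => p.2 \notin p.1) (zip B phi) /\
    partial_BIBD 5 2 [seq p.1 :|: [set p.2] | p : {set 'I_v} * 'I_v <- zip B phi].

Definition exists_nested_BIBD (v : nat) : Prop :=
  exists B : seq {set 'I_v}, nested_BIBD B.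

(* The point set is F x (Z2 x Z2).  Each base block B_j = {(a_i, level i)} is
   developed under the maps (x, g) |-> (c x + t, g + h), with c ranging over a
   half system of C^6 (one of c and -c) and (t, h) over all translations; the
   vertical blocks {u} x (Z2 x Z2) are added.  By (i), the differences a_i - a_i'
   with a given level sum g meet each coset of C^6 once, so every difference
   (d, g) with d <> 0 arises from exactly one base pair and one multiplier, while
   the differences (0, g) are covered by the vertical blocks: this is a
   (4q,4,1)-BIBD.  The developed block c B_j + t is nested with t and the vertical
   block {u} x (Z2 x Z2) with (u + 1, 0); the nesting differences are then
   +-c a_i and +-1, which by (ii) lie in distinct cosets, so each pair is covered
   at most once more. *)

From HB Require Import structures.
From mathcomp Require Import all_boot all_order all_algebra cyclic finfield zify.
Set Implicit Arguments. Unset Strict Implicit.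
Import GRing.Theory.
Local Open Scope ring_scope.

Lemma count_le1_in (T : eqType) (p : pred T) (s : seq T) : uniq s ->
  {in s &, forall x y, p x -> p y -> x = y} -> (count p s <= 1)%N.
Proof.
move=> s_uniq p_inj; case: (posnP (count p s)) => [-> // | ].
rewrite -has_count => /hasP[x xs px].
rewrite (@eq_in_count _ _ (pred1 x)) ?count_uniq_mem ?leq_b1 // => y ys /=.
by apply/idP/eqP => [py | ->]; first exact: p_inj.
Qed.

Section NestedDesignFromBlocks.

Variables (X I : finType) (valid : pred I) (blk : I -> {set X}) (nest : I -> X).

Definition nests (x : I) (P Q : X) := (nest x == P) && (Q \in blk x).

Hypothesis card_blk : forall x, valid x -> #|blk x| = 4%N.
Hypothesis nest_notin_blk : forall x, valid x -> nest x \notin blk x.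
Hypothesis blk_cover : forall P Q, P != Q ->
  exists2 x, valid x & (P \in blk x) && (Q \in blk x).
Hypothesis blk_unique : forall P Q x y, P != Q -> valid x -> valid y ->
  (P \in blk x) && (Q \in blk x) -> (P \in blk y) && (Q \in blk y) -> x = y.
Hypothesis nests_unique : forall P Q x y, valid x -> valid y ->
  nests x P Q || nests x Q P -> nests y P Q || nests y Q P -> x = y.

Let blocks := [seq x <- enum I | valid x].

Let blocks_uniq : uniq blocks.
Proof. by rewrite filter_uniq ?enum_uniq. Qed.

Let mem_blocks x : (x \in blocks) = valid x.
Proof. by rewrite mem_filter mem_enum andbT. Qed.

Let count_pair_blocks P Q : P != Q ->
  count (fun x => (P \in blk x) && (Q \in blk x)) blocks = 1%N.
Proof.
move=> PQ; apply/anti_leq/andP; split.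
  apply: count_le1_in blocks_uniq _ => x y; rewrite !mem_blocks => vx vy.
  exact: blk_unique.
rewrite -has_count; have [x vx PQx] := blk_cover PQ.
by apply/hasP; exists x; rewrite ?mem_blocks.
Qed.

Let count_pair_nested_blocks P Q : P != Q ->
  (count (fun x => (P \in blk x :|: [set nest x]) && (Q \in blk x :|: [set nest x]))
     blocks <= 2)%N.
Proof.
move=> PQ; pose nested x := nests x P Q || nests x Q P.
apply: (@leq_trans (count (fun x => (P \in blk x) && (Q \in blk x)) blocks
                    + count nested blocks)).
  rewrite -count_predUI; apply: leq_trans (leq_addr _ _); apply: sub_count => x.
  rewrite /= /nested /nests !inE.
  case/andP=> /orP[-> | /eqP eP] /orP[hQ | /eqP eQ]; first by rewrite hQ.
  - by rewrite -eQ eqxx !orbT.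
  - by rewrite -eP eqxx hQ orbT.
  - by rewrite eP eQ eqxx in PQ.
rewrite count_pair_blocks // (leq_add2l 1 _ 1).
by apply: count_le1_in blocks_uniq _ => x y; rewrite !mem_blocks; apply: nests_unique.
Qed.

Lemma exists_nested_BIBD_of_blocks : exists_nested_BIBD #|X|.
Proof.
have rank_inj := @enum_rank_inj X.
have mem_rank (A : {set X}) (P : 'I_#|X|) : (P \in enum_rank @: A) = (enum_val P \in A).
  by rewrite -{1}[P]enum_valK mem_imset.
have val_neq (P Q : 'I_#|X|) : P != Q -> enum_val P != enum_val Q.
  by apply: contra => /eqP/enum_val_inj ->.
exists [seq enum_rank @: blk x | x <- blocks]; split; [split|].
- apply/allP => _ /mapP[x + ->]; rewrite mem_blocks => vx.
  by rewrite card_imset ?card_blk.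
- move=> P Q /val_neq PQ; rewrite count_map -(count_pair_blocks PQ).
  by apply: eq_count => x /=; rewrite !mem_rank.
exists [seq enum_rank (nest x) | x <- blocks]; split; first by rewrite !size_map.
rewrite zip_map -map_comp; split; last split.
- apply/allP => _ /mapP[x + ->]; rewrite mem_blocks => vx /=.
  by rewrite mem_imset ?nest_notin_blk.
- apply/allP => _ /mapP[x + ->]; rewrite mem_blocks => vx /=.
  by rewrite -imset_set1 -imsetU card_imset // setUC cardsU1 nest_notin_blk ?card_blk.
move=> P Q /val_neq PQ; rewrite count_map.
under eq_count => x do rewrite /= -imset_set1 -imsetU !mem_rank.
exact: count_pair_nested_blocks.
Qed.

End NestedDesignFromBlocks.

Section SixthPowers.

Variable F : finFieldType.

Lemma C6P (y : F) : reflect (exists2 x, x != 0 & y = x ^+ 6) (y \in C6 F).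
Proof.
rewrite inE; apply: (iffP existsP) => -[x] => [/andP[? /eqP] | ? ->];
  by exists x; rewrite ?eqxx ?andbT.
Qed.

Lemma C6_neq0 (y : F) : y \in C6 F -> y != 0.
Proof. by case/C6P=> x x0 ->; rewrite expf_neq0. Qed.

Lemma C6_expr6 (x : F) : x != 0 -> x ^+ 6 \in C6 F.
Proof. by move=> x0; apply/C6P; exists x. Qed.

Lemma C61 : 1 \in C6 F.
Proof. by rewrite -(expr1n _ 6) C6_expr6 ?oner_neq0. Qed.

Lemma C6M (y z : F) : y \in C6 F -> z \in C6 F -> y * z \in C6 F.
Proof. by case/C6P=> u u0 -> /C6P[v v0 ->]; rewrite -exprMn C6_expr6 ?mulf_neq0. Qed.

Lemma C6V (y : F) : y \in C6 F -> y^-1 \in C6 F.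
Proof. by case/C6P=> u u0 ->; rewrite -exprVn C6_expr6 ?invr_eq0. Qed.

Lemma C6N (y : F) : -1 \in C6 F -> y \in C6 F -> - y \in C6 F.
Proof. by move=> N1 y6; rewrite -mulN1r C6M. Qed.

Lemma C6_mulr_notin (y z : F) : y \in C6 F -> z \notin C6 F -> y * z \notin C6 F.
Proof.
move=> y6; apply: contra => /(C6M (C6V y6)).
by rewrite mulrA mulVf ?C6_neq0 ?mul1r.
Qed.

Lemma same_coset6_neq0 (x y : F) : same_coset6 x y -> y != 0.
Proof.
apply: contraTneq => ->; rewrite /same_coset6 invr0 mulr0.
by apply/negP => /C6_neq0; rewrite eqxx.
Qed.

Lemma same_coset6_sym (x y : F) : same_coset6 x y -> same_coset6 y x.
Proof. by move/C6V; rewrite invf_div. Qed.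

Lemma same_coset6N (x y : F) : -1 \in C6 F -> same_coset6 (- x) y = same_coset6 x y.
Proof.
move=> N1; rewrite /same_coset6 mulNr; apply/idP/idP => /(C6M N1); by rewrite mulN1r ?opprK.
Qed.

Lemma distinct_cosets6_inj (T : eqType) (f : T -> F) (s : seq T) :
  distinct_cosets6 (map f s) -> {in s &, forall i j, same_coset6 (f i) (f j) -> i = j}.
Proof.
case/andP=> _; elim: s => //= i s IHs /andP[/allP fi_new /IHs{}IHs] j k.
rewrite !inE => /predU1P[-> | js] /predU1P[-> | ks] // jk.
- by have := fi_new _ (map_f f ks); rewrite jk.
- by have := fi_new _ (map_f f js); rewrite same_coset6_sym.
- exact: IHs.
Qed.

End SixthPowers.

Section CyclicUnits.

Variables (F : finFieldType) (n : nat).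
Hypothesis cardF : #|F| = (12 * n + 1)%N.

Let expr_order (x : F) : x != 0 -> x ^+ (12 * n) = 1.
Proof.
move=> x0; apply: (mulfI x0); rewrite mulr1 -exprS -addn1 -cardF.
exact: expf_card.
Qed.

Let n_gt0 : (0 < n)%N.
Proof. by have := finNzRing_gt1 F; rewrite cardF; case: n. Qed.

Let primitive_root_exists : exists z : F, (12 * n).-primitive_root z.
Proof.
have /hasP[z _ prim_z] : has (12 * n).-primitive_root (enum (predC1 (0 : F))).
  apply: has_prim_root; rewrite ?muln_gt0 ?enum_uniq -?cardE ?cardC1 ?cardF ?addn1 //.
  by apply/allP => x; rewrite mem_enum unity_rootE => /expr_order->.
by exists z.
Qed.

Let primitive_root_half (z : F) : (12 * n).-primitive_root z -> z ^+ (6 * n) = -1.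
Proof.
move=> prim_z; have : (z ^+ (6 * n)) ^+ 2 == 1 by rewrite -exprM mulnAC prim_expr_order.
by rewrite sqrf_eq1 -(prim_order_dvd prim_z) !(mulnC _ n) (dvdn_pmul2l n_gt0) => /eqP.
Qed.

Lemma C6_N1 : -1 \in C6 F.
Proof.
have [z prim_z] := primitive_root_exists.
rewrite -(primitive_root_half prim_z) mulnC exprM C6_expr6 // expf_neq0 //.
by rewrite (prim_root_eq0 prim_z) muln_eq0 -lt0n n_gt0.
Qed.

Lemma oner_neqN1 : (1 : F) != -1.
Proof.
have [z prim_z] := primitive_root_exists.
rewrite -(primitive_root_half prim_z) eq_sym -(prim_order_dvd prim_z).
by rewrite !(mulnC _ n) (dvdn_pmul2l n_gt0).
Qed.

Lemma size_distinct_cosets6 (s : seq F) : distinct_cosets6 s -> (size s <= 6)%N.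
Proof.
have [z prim_z] := primitive_root_exists.
have z_neq0 i : z ^+ i != 0.
  by rewrite expf_neq0 ?(prim_root_eq0 prim_z) ?muln_eq0 -?lt0n ?n_gt0.
pose idx x : 'I_6 := odflt ord0 [pick i : 'I_6 | x / z ^+ i \in C6 F].
have idxP x : x != 0 -> x / z ^+ idx x \in C6 F.
  move=> x0; rewrite /idx; case: pickP => [i //|no_i] /=.
  have [k xk] := prim_rootP prim_z (expr_order x0).
  have := no_i (Ordinal (ltn_pmod k (isT : 0 < 6)%N)).
  by rewrite /= xk {1}(divn_eq k 6) exprD mulfK // exprM C6_expr6.
have idx_coset x y : x != 0 -> y != 0 -> idx x = idx y -> same_coset6 x y.
  move=> x0 y0 xy; have := C6M (idxP x x0) (C6V (idxP y y0)).
  by rewrite xy invf_div mulrA divfK.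
case/andP=> s_neq0 s_distinct; rewrite -(size_map idx).
have /card_uniqP <- : uniq (map idx s).
  rewrite uniq_pairwise pairwise_map; apply: sub_in_pairwise s_neq0 s_distinct.
  by move=> x y x0 y0; apply: contra => /eqP; apply: idx_coset.
by apply: leq_trans (max_card _) _; rewrite card_ord.
Qed.

Lemma complete_rep6_cover (s : seq F) (d : F) :
  complete_rep6 s -> d != 0 -> exists2 e, e \in s & same_coset6 d e.
Proof.
case/andP=> /eqP s_size /andP[s_neq0 s_distinct] d0; apply/hasP; apply: contraT => no_e.
have := size_distinct_cosets6 (s := d :: s); rewrite /= s_size ltnn; apply.
by rewrite /distinct_cosets6 /= d0 s_neq0 s_distinct all_predC no_e.
Qed.

End CyclicUnits.

Section HalfSystem.

Variable F : finFieldType.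

(* Comparing ranks in [enum F] is an arbitrary way to keep one of [c] and [-c]. *)
Definition C6half (c : F) : bool := (c \in C6 F) && (enum_rank c < enum_rank (- c))%N.

Lemma C6half_C6 (c : F) : C6half c -> c \in C6 F.
Proof. by case/andP. Qed.

Lemma C6halfN (c : F) : C6half c -> ~~ C6half (- c).
Proof. by case/andP=> _ lt; rewrite /C6half opprK negb_and -leqNgt ltnW ?orbT. Qed.

Hypotheses (N1_C6 : -1 \in C6 F) (one_neqN1 : (1 : F) != -1).

Lemma C6half_sign (c : F) : c \in C6 F -> C6half c || C6half (- c).
Proof.
move=> c6; rewrite /C6half c6 C6N // opprK /= -neq_ltn (inj_eq val_inj) (inj_eq enum_rank_inj).
rewrite -subr_eq0 opprK -mulr2n -mulr_natr mulf_eq0 (negPf (C6_neq0 c6)) /=.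
by move: one_neqN1; rewrite -subr_eq0 opprK.
Qed.

End HalfSystem.

Definition klein := (bool * bool)%type.
HB.instance Definition _ := Finite.on klein.

Definition klein_add (g h : klein) : klein := (g.1 (+) h.1, g.2 (+) h.2).

Lemma klein_addA : associative klein_add. Proof. by do 3!case=> [[] []]. Qed.
Lemma klein_addC : commutative klein_add. Proof. by do 2!case=> [[] []]. Qed.
Lemma klein_add0 : left_id (false, false) klein_add. Proof. by case=> [[] []]. Qed.
Lemma klein_addNr : left_inverse (false, false) id klein_add. Proof. by case=> [[] []]. Qed.

HB.instance Definition _ :=
  GRing.isZmodule.Build klein klein_addA klein_addC klein_add0 klein_addNr.

(* The j-th base block consists of the points [(a i, level i)], [i \in base_block j];
   [Delta g] and [Ulist g] are the lists Delta_g and U_g of the statement, by index. *)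
Definition base_block (j : nat) : seq nat := iota (4 * j + 1) 4.

Definition level (i : nat) : klein :=
  match i with
  | 3 | 7 | 13 => (false, true)
  | 4 | 8 | 14 => (true, false)
  | 10 | 11 | 12 | 15 | 16 => (true, true)
  | _ => (false, false)
  end%N.

Definition Delta (g : klein) : seq (nat * nat) :=
  match g with
  | (false, false) => [:: (1, 2); (5, 6); (10, 11); (10, 12); (11, 12); (15, 16)]
  | (false, true) => [:: (1, 3); (2, 3); (5, 7); (6, 7); (14, 15); (14, 16)]
  | (true, false) => [:: (1, 4); (2, 4); (5, 8); (6, 8); (13, 15); (13, 16)]
  | (true, true) => [:: (3, 4); (7, 8); (9, 10); (9, 11); (9, 12); (13, 14)]
  end%N.

Definition Ulist (g : klein) : seq nat :=
  match g with
  | (false, false) => [:: 1; 2; 5; 6; 9]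
  | (false, true) => [:: 3; 7; 13]
  | (true, false) => [:: 4; 8; 14]
  | (true, true) => [:: 10; 11; 12; 15; 16]
  end%N.

Lemma base_block_inj (j j' : 'I_4) (i : nat) :
  i \in base_block j -> i \in base_block j' -> j = j'.
Proof. by rewrite !mem_iota => ? ?; apply: val_inj => /=; lia. Qed.

Lemma level_Ulist (j : 'I_4) (i : nat) : i \in base_block j -> i \in Ulist (level i).
Proof.
move=> i_j; have /allP : all (fun i => i \in Ulist (level i)) (iota 1 16) by [].
by apply; move: i_j (ltn_ord j); rewrite !mem_iota; lia.
Qed.

Lemma Delta_block (g : klein) (p : nat * nat) : p \in Delta g ->
  exists2 j : 'I_4, (p.1 \in base_block j) && (p.2 \in base_block j) &
    level p.1 + level p.2 = g.
Proof.
have /allP Delta_ok : all (fun p => (level p.1 + level p.2 == g) &&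
    has (fun j => (p.1 \in base_block j) && (p.2 \in base_block j)) (iota 0 4)) (Delta g).
  by case: g => [[] []].
move=> /Delta_ok /andP[/eqP <- /hasP[j]]; rewrite mem_iota => /= j4.
by exists (Ordinal j4).
Qed.

Lemma block_pair_Delta (j : 'I_4) (i i' : nat) :
  i \in base_block j -> i' \in base_block j -> i != i' ->
  (minn i i', maxn i i') \in Delta (level i + level i').
Proof.
have /allP/(_ j) : all (fun j => all (fun i => all (fun i' =>
    (i < i')%N ==> ((i, i') \in Delta (level i + level i')))
  (base_block j)) (base_block j)) (iota 0 4) by [].
rewrite mem_iota ltn_ord => /(_ isT) /allP sorted_ok ij i'j.
rewrite neq_ltn => /orP[] lt.
  rewrite (minn_idPl (ltnW lt)) (maxn_idPr (ltnW lt)).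
  exact: (implyP (allP (sorted_ok i ij) i' i'j)).
rewrite (minn_idPr (ltnW lt)) (maxn_idPl (ltnW lt)) addrC.
exact: (implyP (allP (sorted_ok i' i'j) i ij)).
Qed.


Section Construction.

Variables (F : finFieldType) (n : nat) (a : nat -> F).
Hypothesis cardF : #|F| = (12 * n + 1)%N.
Hypothesis Delta_rep : forall g, complete_rep6 [seq a p.1 - a p.2 | p <- Delta g].
Hypothesis Ulist_rep : forall g, partial_rep6 [seq a i | i <- Ulist g].

Let N1_C6 := C6_N1 cardF.
Let one_neqN1 := oner_neqN1 cardF.

Local Notation G := (F * klein)%type.

Definition point (i : nat) : G := (a i, level i).

Definition scale (c : F) (p : G) : G := (c * p.1, p.2).

Lemma scaleB (c : F) (p q : G) : scale c (p - q) = scale c p - scale c q.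
Proof. by rewrite /scale /= mulrBr. Qed.

Lemma scaleN (c : F) (p : G) : - scale c p = scale (- c) p.
Proof. by rewrite /scale /= mulNr. Qed.

Lemma a_neq0 (j : 'I_4) (i : nat) : i \in base_block j -> a i != 0.
Proof.
move=> ij; have /andP[/andP[/allP a_nz _] _] := Ulist_rep (level i).
exact/a_nz/map_f/(level_Ulist ij).
Qed.

Lemma a_notin_C6 (j : 'I_4) (i : nat) : i \in base_block j -> a i \notin C6 F.
Proof.
move=> ij; have /andP[_ /allP a_n6] := Ulist_rep (level i).
exact/a_n6/map_f/(level_Ulist ij).
Qed.

Lemma a_inj (j : 'I_4) (i i' : nat) :
  i \in base_block j -> i' \in base_block j -> a i = a i' -> i = i'.
Proof.
move=> ij i'j aii'; apply/eqP; apply: contraT => ii'.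
have /andP[_ /andP[/allP Delta_nz _]] := Delta_rep (level i + level i').
have := Delta_nz _ (map_f (fun p => a p.1 - a p.2) (block_pair_Delta ij i'j ii')).
by rewrite /= /minn /maxn; case: ltnP; rewrite aii' subrr eqxx.
Qed.

Lemma diff_cover (d : G) : d.1 != 0 ->
  exists (j : 'I_4) (i i' : nat) (c : F),
    [/\ i \in base_block j, i' \in base_block j, C6half c & scale c (point i' - point i) = d].
Proof.
case: d => [delta g] /= delta0.
have [_ /mapP[p p_Delta ->] delta_p] := complete_rep6_cover cardF (Delta_rep g) delta0.
have [j /andP[p1j p2j] g_p] := Delta_block p_Delta.
have p_neq0 := same_coset6_neq0 delta_p.
case/orP: (C6half_sign N1_C6 one_neqN1 delta_p) => half_c.
  exists j, p.2, p.1, (delta / (a p.1 - a p.2)); split => //.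
  by rewrite /scale /= divfK // g_p.
exists j, p.1, p.2, (- (delta / (a p.1 - a p.2))); split => //.
by rewrite /scale /= mulNr -mulrN opprB divfK // addrC g_p.
Qed.

Lemma same_coset6_minmax (i i' : nat) (x : F) :
  same_coset6 (a (minn i i') - a (maxn i i')) x = same_coset6 (a i' - a i) x.
Proof. by rewrite /minn /maxn; case: ltnP => // _; rewrite -opprB same_coset6N. Qed.

Lemma diff_unique (j j' : 'I_4) (i i' k k' : nat) (c c' : F) :
  i \in base_block j -> i' \in base_block j -> k \in base_block j' -> k' \in base_block j' ->
  i != i' -> C6half c -> C6half c' ->
  scale c (point i' - point i) = scale c' (point k' - point k) ->
  [/\ j = j', i = k, i' = k' & c = c'].
Proof.
move=> ij i'j kj' k'j' ii' half_c half_c' e.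
have eF : c * (a i' - a i) = c' * (a k' - a k) := congr1 fst e.
have eL : level i' - level i = level k' - level k := congr1 snd e.
have c0 := C6_neq0 (C6half_C6 half_c); have c'0 := C6_neq0 (C6half_C6 half_c').
have ai0 : a i' - a i != 0.
  by rewrite subr_eq0; apply: contra ii' => /eqP/(a_inj i'j ij)->.
have kk' : k != k'.
  by apply: contraNneq (mulf_neq0 c0 ai0) => kk'; rewrite eF kk' subrr mulr0.
have ak0 : a k' - a k != 0.
  by rewrite subr_eq0; apply: contra kk' => /eqP/(a_inj k'j' kj')->.
have same_ik : same_coset6 (a i' - a i) (a k' - a k).
  rewrite /same_coset6 (_ : _ / _ = c' / c) ?C6M ?C6V ?C6half_C6 //.
  by apply/eqP; rewrite eqr_div // mulrC eF eqxx.
have same_g : level i + level i' = level k + level k' by rewrite addrC [RHS]addrC; exact: eL.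
have same_pairs : same_coset6 (a (minn i i') - a (maxn i i'))
                              (a (minn k k') - a (maxn k k')).
  rewrite same_coset6_minmax; apply: same_coset6_sym.
  by rewrite same_coset6_minmax; apply: same_coset6_sym.
have /andP[_ Delta_distinct] := Delta_rep (level i + level i').
have kk'_Delta := block_pair_Delta kj' k'j' kk'; rewrite -same_g in kk'_Delta.
have [min_eq max_eq] :=
  distinct_cosets6_inj Delta_distinct (block_pair_Delta ij i'j ii') kk'_Delta same_pairs.
have [[ik i'k] | [ik i'k]] : (i = k /\ i' = k') \/ (i = k' /\ i' = k).
  by clear -min_eq max_eq; lia.
  by subst k k'; split => //; [apply: base_block_inj ij kj' | apply: (mulIf ai0)].
have cc' : c = - c' by apply: (mulIf ai0); rewrite eF ik i'k mulNr -mulrN opprB.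
by move: (C6halfN half_c'); rewrite -cc' half_c.
Qed.

Lemma scale_point_inj (j j' : 'I_4) (i k : nat) (s s' : F) :
  i \in base_block j -> k \in base_block j' -> s \in C6 F -> s' \in C6 F ->
  scale s (point i) = scale s' (point k) -> i = k /\ s = s'.
Proof.
move=> ij kj' s6 s'6 e.
have eF : s * a i = s' * a k := congr1 fst e.
have eL : level i = level k := congr1 snd e.
have ak0 := a_neq0 kj'; have s0 := C6_neq0 s6.
have same_ik : same_coset6 (a i) (a k).
  rewrite /same_coset6 (_ : _ / _ = s' / s) ?C6M ?C6V //.
  by apply/eqP; rewrite eqr_div // mulrC eF eqxx.
have /andP[U_distinct _] := Ulist_rep (level i).
have ik : i = k.
  apply: (distinct_cosets6_inj U_distinct (level_Ulist ij) _ same_ik).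
  by rewrite eL; apply: level_Ulist kj'.
by subst k; split => //; apply: (mulIf ak0).
Qed.

Lemma scale_a_notin_C6 (j : 'I_4) (i : nat) (s : F) :
  i \in base_block j -> s \in C6 F -> s * a i \notin C6 F.
Proof. by move=> ij s6; apply: C6_mulr_notin s6 (a_notin_C6 ij). Qed.

(* [inl (j, c, t)] indexes the block [c B_j + t], [inr u] the vertical block [{u} x klein]. *)
Definition block_index := ('I_4 * F * G + F)%type.

Definition block (x : block_index) : {set G} :=
  match x with
  | inl (j, c, t) => [set p in [seq scale c (point i) + t | i <- base_block j]]
  | inr u => [set p | p.1 == u]
  end.

Definition nest (x : block_index) : G :=
  match x with
  | inl (_, _, t) => t
  | inr u => (u + 1, 0)
  end.

Definition valid_block (x : block_index) : bool :=
  if x is inl (_, c, _) then C6half c else true.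

Lemma dev_blockP (j : 'I_4) (c : F) (t p : G) :
  reflect (exists2 i, i \in base_block j & p = scale c (point i) + t)
          (p \in block (inl (j, c, t))).
Proof. by rewrite inE; apply: mapP. Qed.

Lemma dev_block_fst_inj (j : 'I_4) (c : F) (t p q : G) : C6half c ->
  p \in block (inl (j, c, t)) -> q \in block (inl (j, c, t)) -> p.1 = q.1 -> p = q.
Proof.
move=> half_c /dev_blockP[i ij ->] /dev_blockP[i' i'j ->] /addIr.
by move=> /(mulfI (C6_neq0 (C6half_C6 half_c)))/(a_inj ij i'j)->.
Qed.

Lemma card_block (x : block_index) : valid_block x -> #|block x| = 4%N.
Proof.
case: x => [[[j c] t] | u] /= => [half_c | _].
  have block_uniq : uniq [seq scale c (point i) + t | i <- base_block j].
    rewrite map_inj_in_uniq ?iota_uniq // => i i' ij i'j e.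
    apply: (a_inj ij i'j); apply: (mulfI (C6_neq0 (C6half_C6 half_c))).
    exact: addIr (congr1 fst e).
  by rewrite cardsE (card_uniqP block_uniq) size_map size_iota.
have -> : [set p : G | p.1 == u] = pair u @: [set: klein].
  apply/setP => -[v g]; rewrite !inE; apply/eqP/imsetP => [/= -> | [h _ [-> _]] //].
  by exists g; rewrite ?inE.
by rewrite card_imset ?cardsT ?card_prod ?card_bool // => g h [].
Qed.

Lemma nest_notin_block (x : block_index) : valid_block x -> nest x \notin block x.
Proof.
case: x => [[[j c] t] | u] /= => [half_c | _].
  apply/dev_blockP => -[i ij /(congr1 fst) /eqP].
  rewrite eq_sym -subr_eq0 addrK mulf_eq0 (negPf (C6_neq0 (C6half_C6 half_c))).
  by rewrite (negPf (a_neq0 ij)).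
by rewrite inE /= -subr_eq0 addrC addKr oner_eq0.
Qed.

Lemma block_cover (P Q : G) : P != Q ->
  exists2 x, valid_block x & (P \in block x) && (Q \in block x).
Proof.
move=> PQ; have [P1Q1 | P1Q1] := eqVneq P.1 Q.1.
  by exists (inr P.1); rewrite //= !inE P1Q1 eqxx.
have /diff_cover[j [i [i' [c [ij i'j half_c e]]]]] : (Q - P).1 != 0.
  by rewrite /= subr_eq0 eq_sym.
exists (inl (j, c, P - scale c (point i))) => //; apply/andP; split; apply/dev_blockP.
  by exists i => //; rewrite addrC subrK.
by exists i' => //; rewrite addrCA -scaleB e addrC subrK.
Qed.

Lemma dev_block_diff (j : 'I_4) (c : F) (t P Q : G) :
  P \in block (inl (j, c, t)) -> Q \in block (inl (j, c, t)) ->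
  exists i i', [/\ i \in base_block j, i' \in base_block j, P = scale c (point i) + t
                 & Q - P = scale c (point i' - point i)].
Proof.
move=> /dev_blockP[i ij ->] /dev_blockP[i' i'j ->]; exists i, i'; split => //.
by rewrite scaleB opprD addrACA subrr addr0.
Qed.

Lemma block_unique (P Q : G) (x y : block_index) : P != Q ->
  valid_block x -> valid_block y ->
  (P \in block x) && (Q \in block x) -> (P \in block y) && (Q \in block y) -> x = y.
Proof.
move=> PQ; case: x => [[[j c] t] | u]; case: y => [[[j' c'] t'] | u'] /= vx vy.
- case/andP=> /dev_block_diff/[apply] -[i [i' [ij i'j Pi ei]]].
  case/andP=> /dev_block_diff/[apply] -[k [k' [kj' k'j' Pk ek]]].
  have ii' : i != i'.
    by apply: contraNneq PQ => ii'; rewrite eq_sym -subr_eq0 ei ii' subrr /scale /= mulr0.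
  case: (diff_unique ij i'j kj' k'j' ii' vx vy (etrans (esym ei) ek)) => jj' ik _ cc'.
  by subst j' k c'; rewrite Pi in Pk; rewrite (addrI _ Pk).
- move=> /andP[Px Qx]; rewrite !inE => /andP[/eqP P1 /eqP Q1].
  by case/eqP: PQ; apply: (dev_block_fst_inj vx Px Qx); rewrite P1 Q1.
- move=> + /andP[Py Qy]; rewrite !inE => /andP[/eqP P1 /eqP Q1].
  by case/eqP: PQ; apply: (dev_block_fst_inj vy Py Qy); rewrite P1 Q1.
- by rewrite !inE => /andP[/eqP <- _] /andP[/eqP <- _].
Qed.

Local Notation nests := (nests block nest).

Lemma dev_nests (j : 'I_4) (c : F) (t P Q : G) : nests (inl (j, c, t)) P Q ->
  t = P /\ exists2 i, i \in base_block j & Q - P = scale c (point i).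
Proof.
rewrite /nests /= => /andP[/eqP <- /dev_blockP[i ij ->]].
by split => //; exists i; rewrite ?addrK.
Qed.

Lemma vert_nests (u : F) (P Q : G) : nests (inr u) P Q -> Q.1 - P.1 = -1.
Proof.
rewrite /nests /= inE => /andP[/eqP <- /eqP /= ->].
by rewrite opprD addrA subrr add0r.
Qed.

Lemma nests_same (P Q : G) (x y : block_index) : valid_block x -> valid_block y ->
  nests x P Q -> nests y P Q -> x = y.
Proof.
case: x => [[[j c] t] | u]; case: y => [[[j' c'] t'] | u'] /= vx vy.
- move=> /dev_nests[-> [i ij ei]] /dev_nests[-> [k kj' ek]].
  have [ik cc'] := scale_point_inj ij kj' (C6half_C6 vx) (C6half_C6 vy) (etrans (esym ei) ek).
  by subst k c'; rewrite (base_block_inj ij kj').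
- move=> /dev_nests[_ [i ij /(congr1 fst)/= ei]] /vert_nests.
  by have := scale_a_notin_C6 ij (C6half_C6 vx); rewrite -ei => /negPf + e1; rewrite e1 N1_C6.
- move=> /vert_nests + /dev_nests[_ [k kj' /(congr1 fst)/= ek]].
  by have := scale_a_notin_C6 kj' (C6half_C6 vy); rewrite -ek => /negPf + e1; rewrite e1 N1_C6.
- by rewrite /nests /= => /andP[/eqP <- _] /andP[/eqP [/addIr ->] _].
Qed.

Lemma nests_opp (P Q : G) (x y : block_index) : valid_block x -> valid_block y ->
  nests x P Q -> nests y Q P -> False.
Proof.
case: x => [[[j c] t] | u]; case: y => [[[j' c'] t'] | u'] /= vx vy.
- move=> /dev_nests[_ [i ij ei]] /dev_nests[_ [k kj' ek]].
  have e : scale c (point i) = scale (- c') (point k) by rewrite -scaleN -ek -ei opprB.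
  have [_ cc'] := scale_point_inj ij kj' (C6half_C6 vx) (C6N N1_C6 (C6half_C6 vy)) e.
  by move: (C6halfN vy); rewrite -cc' vx.
- move=> /dev_nests[_ [i ij /(congr1 fst)/= ei]] /vert_nests.
  have := scale_a_notin_C6 ij (C6half_C6 vx); rewrite -ei => /negPf + e1.
  by rewrite -opprB e1 opprK C61.
- move=> /vert_nests + /dev_nests[_ [k kj' /(congr1 fst)/= ek]].
  have := scale_a_notin_C6 kj' (C6half_C6 vy); rewrite -ek => /negPf + e1.
  by rewrite -opprB e1 opprK C61.
- move=> /vert_nests e1 /vert_nests; rewrite -opprB e1 opprK => /eqP.
  by rewrite (negPf one_neqN1).
Qed.

Lemma nests_unique (P Q : G) (x y : block_index) : valid_block x -> valid_block y ->
  nests x P Q || nests x Q P -> nests y P Q || nests y Q P -> x = y.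
Proof.
move=> vx vy /orP[] nx /orP[] ny; try exact: nests_same vx vy nx ny.
  by case: (nests_opp vx vy nx ny).
by case: (nests_opp vy vx ny nx).
Qed.

Lemma exists_nested_BIBD_4q : exists_nested_BIBD (4 * #|F|).
Proof.
have -> : (4 * #|F|)%N = #|{: G}| by rewrite !card_prod card_bool mulnC.
exact: exists_nested_BIBD_of_blocks card_block nest_notin_block block_cover
  block_unique nests_unique.
Qed.

End Construction.

Theorem mainTheorem17 (F : finFieldType) (n : nat) (a : nat -> F) :
  #|F| = (12 * n + 1)%N ->
  (forall i : nat, (1 <= i <= 16)%N -> a i != 0) ->
  complete_rep6 [:: a 1%N - a 2%N; a 5%N - a 6%N; a 10%N - a 11%N; a 10%N - a 12%N; a 11%N - a 12%N; a 15%N - a 16%N] ->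
  complete_rep6 [:: a 1%N - a 3%N; a 2%N - a 3%N; a 5%N - a 7%N; a 6%N - a 7%N; a 14%N - a 15%N; a 14%N - a 16%N] ->
  complete_rep6 [:: a 1%N - a 4%N; a 2%N - a 4%N; a 5%N - a 8%N; a 6%N - a 8%N; a 13%N - a 15%N; a 13%N - a 16%N] ->
  complete_rep6 [:: a 3%N - a 4%N; a 7%N - a 8%N; a 9%N - a 10%N; a 9%N - a 11%N; a 9%N - a 12%N; a 13%N - a 14%N] ->
  partial_rep6 [:: a 1%N; a 2%N; a 5%N; a 6%N; a 9%N] ->
  partial_rep6 [:: a 3%N; a 7%N; a 13%N] ->
  partial_rep6 [:: a 4%N; a 8%N; a 14%N] ->
  partial_rep6 [:: a 10%N; a 11%N; a 12%N; a 15%N; a 16%N] ->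
  exists_nested_BIBD (4 * #|F|).
Proof.
(* Nonvanishing of the [a i] is part of (ii): every index occurs in some U list. *)
move=> cardF _ D00 D01 D10 D11 U00 U01 U10 U11.
by apply: (exists_nested_BIBD_4q (a := a) cardF); case=> [[] []].
Qed.
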